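(* Let $\Lambda$ be a finite connected graph with $N$ sites, $\mathcal{H}=\bigotimes_{x\in\Lambda}\mathfrak{h}_x$ with each $\mathfrak{h}_x$ a copy of a finite-dimensional Hilbert space $\mathfrak{h}$, $\mathfrak{h}^s\subset\mathfrak{h}$ a subspace, and $\mathrm{Sym}^N(\mathfrak{h}^s)\subset\mathcal{H}$ the totally symmetric subspace of $\bigotimes_{x}\mathfrak{h}^s_x$. If a linear operator $\hat{H}$ on $\mathcal{H}$ leaves $\mathrm{Sym}^N(\mathfrak{h}^s)$ invariant, then $\hat{H}=\hat{H}_A+\hat{H}_Z$, where $\hat{H}_Z$ is totally symmetric (i.e. $\hat{\sigma}\hat{H}_Z\hat{\sigma}^{-1}=\hat{H}_Z$ for all site permutations $\sigma\in\mathfrak{S}_N$), $\hat{H}_A$ annihilates $\mathrm{Sym}^N(\mathfrak{h}^s)$, and $\hat{H}_A$ can be written as $$\hat{H}_A=\sum_{x\in\Lambda}\hat{h}^{(1)}_{[x]}\hat{P}_x+\sum_{\langle x,y\rangle}\hat{h}^{(2)}_{[xy]}\hat{P}_{xy},$$ where the second sum runs over nearest-neighbour pairs, each $\hat{P}_x$ (resp. $\hat{P}_{xy}$) is an orthogonal projector acting non-trivially only on site $x$ (resp. on sites $x,y$) and annihilating $\mathrm{Sym}^N(\mathfrak{h}^s)$, and $\hat{h}^{(1)}_{[x]},\hat{h}^{(2)}_{[xy]}$ are some (not necessarily local) operators on $\mathcal{H}$. In particular, vectors of $\mathrm{Sym}^N(\mathfrak{h}^s)$ that are eigenvectors of $\hat{H}_Z$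 are eigenvectors of $\hat{H}$ with the same eigenvalues.
   Context: For $\sigma\in\mathfrak{S}_N$, $\hat{\sigma}$ is the operator on $\mathcal{H}$ permuting the tensor factors: $\hat{\sigma}\bigotimes_x|e_x\rangle_x=\bigotimes_x|e_{\sigma(x)}\rangle_x$. $\mathrm{Sym}^N(\mathfrak{h}^s)=\{v\in\bigotimes_x\mathfrak{h}^s_x:\hat{\sigma}v=v\ \forall\sigma\}$. An operator annihilates a subspace if it maps all its vectors to $0$. *)

From HB Require Import structures.
From mathcomp Require Import all_boot all_order all_fingroup all_algebra.
Set Implicit Arguments. Unset Strict Implicit. Unset Printing Implicit Defensive.
Import Order.TTheory GRing.Theory Num.Theory.
Local Open Scope ring_scope.

(* The single-site Hilbert space h is C^d (row vectors 'rV[C]_d, standard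
   basis e_0..e_{d-1}); sites are 'I_N.  The many-body space
   H = (x)_{x in 'I_N} h_x has orthonormal basis e_c := (x)_x e_{c x}
   indexed by configurations c : 'I_N -> 'I_d.  Vectors of H are
   coefficient functions cfg -> C, operators are kernels cfg -> cfg -> C
   (matrix entries <e_c, A e_c'>). *)

Definition cfg (N d : nat) := {ffun 'I_N -> 'I_d}.
Definition vec (C : numClosedFieldType) N d := cfg N d -> C.
Definition op (C : numClosedFieldType) N d := cfg N d -> cfg N d -> C.

Section Ops.
Variables (C : numClosedFieldType) (N d : nat).

Definition opapp (A : op C N d) (v : vec C N d) : vec C N d :=
  fun c => \sum_(c' : cfg N d) A c c' * v c'.
Definition opmul (A B : op C N d) : op C N d :=
  fun c c'' => \sum_(c' : cfg N d) A c c' * B c' c''.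
Definition opadd (A B : op C N d) : op C N d := fun c c' => A c c' + B c c'.
Definition opadj (A : op C N d) : op C N d := fun c c' => (A c' c)^*.

Definition permop (s : 'S_N) : op C N d :=
  fun c c' => (c == [ffun x => c' (s x)])%:R.

(* (x)_x h^s_x, h^s = row space of S : span of product vectors
   (x)_x u_x with every u_x in h^s *)
Definition in_tensor k (S : 'M[C]_(k, d)) (v : vec C N d) : Prop :=
  exists m (u : 'I_m -> 'I_N -> 'rV[C]_d),
    (forall i x, (u i x <= S)%MS) /\
    v = fun c => \sum_(i < m) \prod_(x : 'I_N) u i x 0 (c x).

Definition in_sym k (S : 'M[C]_(k, d)) (v : vec C N d) : Prop :=
  in_tensor S v /\ forall s : 'S_N, opapp (permop s) v = v.

Definition annihilates k (S : 'M[C]_(k, d)) (A : op C N d) : Prop :=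
  forall v, in_sym S v -> opapp A v = (fun _ => 0).

Definition orth_proj (P : op C N d) : Prop := opmul P P = P /\ opadj P = P.

(* A acts non-trivially only on the sites in X : A = A_X (x) 1_{complement} *)
Definition acts_only_on (X : {set 'I_N}) (A : op C N d) : Prop :=
  exists f : op C N d,
    (forall c c', A c c' =
       if [forall z, (z \notin X) ==> (c z == c' z)] then f c c' else 0) /\
    (forall c1 c1' c2 c2' : cfg N d,
       (forall z, z \in X -> c1 z = c2 z /\ c1' z = c2' z) ->
       f c1 c1' = f c2 c2').
End Ops.

Definition connected_graph N (e : rel 'I_N) : Prop :=
  symmetric e /\ irreflexive e /\ forall x y, connect e x y.

(* Let Q be the orthogonal projector of h onto h^s, T = Q^(x)N the projector
   onto (x)_x h^s_x and A = (1/N!) sum_s s^ the symmetrizer.  Then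
   Pi = A T A fixes Sym^N(h^s) pointwise and maps H into it, so H_Z = H Pi
   commutes with every s^ as soon as H leaves Sym^N(h^s) invariant, while
   H_A = H (1 - Pi) annihilates Sym^N(h^s).  Moreover
   1 - Pi = (1 - A) + A (1 - T) + A T (1 - A) lies in the left ideal generated
   by the site projectors P_x = 1 - Q_x and the bond projectors
   P_xy = (1 - (x y)^)/2: telescoping gives 1 - T = sum_k T_k P_k, where T_k
   applies Q on the first k sites, and 1 - s^ lies in the ideal for every
   permutation s because 1 - (s t)^ = (1 - s^) + s^ (1 - t^) and, for an edge
   {b, c} of the connected graph, (a c) = (b c) (a b) (b c). *)

From HB Require Import structures.
From mathcomp Require Import all_boot all_order all_fingroup all_algebra.
From mathcomp Require Import spectral ring.
From Stdlib Require Import FunctionalExtensionality.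
Import Order.TTheory GRing.Theory Num.Theory.
Set Implicit Arguments. Unset Strict Implicit. Unset Printing Implicit Defensive.
Local Open Scope ring_scope.

Section OrthoProj.
Variables (C : numClosedFieldType) (k d : nat) (S : 'M[C]_(k, d)).
Local Open Scope sesquilinear_scope.

Let B := schmidt (row_base S).

Let B_unitary : B \is unitarymx.
Proof. exact/schmidt_unitarymx/rank_leq_col. Qed.

Let B_eqmx : (B :=: S)%MS.
Proof. exact/(eqmx_trans (eqmx_schmidt_free (row_base_free S)))/eq_row_base. Qed.

Definition orthoproj : 'M[C]_d := B^t* *m B.

Lemma orthoproj_idem : orthoproj *m orthoproj = orthoproj.
Proof. by rewrite /orthoproj mulmxA -(mulmxA _ B) (unitarymxP B_unitary) mulmx1. Qed.

Lemma orthoproj_conj i j : (orthoproj i j)^* = orthoproj j i.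
Proof.
rewrite !mxE rmorph_sum; apply: eq_bigr => l _.
by rewrite !mxE rmorphM /= conjCK mulrC.
Qed.

Lemma row_orthoproj_sub i : (row i orthoproj <= S)%MS.
Proof. by rewrite -B_eqmx (submx_trans (row_sub _ _)) ?submxMl. Qed.

Lemma orthoproj_id (u : 'rV[C]_d) : (u <= S)%MS -> u *m orthoproj = u.
Proof.
rewrite -B_eqmx => /submxP [w ->].
by rewrite mulmxA -(mulmxA w) (unitarymxP B_unitary) mulmx1.
Qed.

End OrthoProj.

Section OpAlgebra.
Variables (C : numClosedFieldType) (N d : nat).
Local Notation op := (op C N d).
Local Notation vec := (vec C N d).
Local Notation cfg := (cfg N d).
Local Notation pop := (@permop C N d).

Definition idop : op := fun c c' => (c == c')%:R.
Definition opsub (A B : op) : op := fun c c' => A c c' - B c c'.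
Definition opscale (a : C) (A : op) : op := fun c c' => a * A c c'.

Lemma op_ext (A B : op) : (forall c c', A c c' = B c c') -> A = B.
Proof.
by move=> AB; do 2![apply: functional_extensionality => ?]; apply: AB.
Qed.

Lemma opappM (A B : op) (v : vec) : opapp (opmul A B) v = opapp A (opapp B v).
Proof.
apply: functional_extensionality => c; rewrite /opapp /opmul.
under eq_bigr do rewrite mulr_suml.
rewrite exchange_big /=; apply: eq_bigr => c1 _.
by rewrite mulr_sumr; apply: eq_bigr => c2 _; rewrite mulrA.
Qed.

Lemma opmulA (A B D : op) : opmul A (opmul B D) = opmul (opmul A B) D.
Proof.
apply: op_ext => c c'.
by have := congr1 (fun f => f c) (opappM A B (fun x => D x c')); rewrite /opapp /opmul.
Qed.

Lemma opsubrr (A : op) : opsub A A = (fun _ _ => 0).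
Proof. by apply: op_ext => c c'; rewrite /opsub subrr. Qed.

Lemma opmulDl (A B D : op) : opmul (opadd A B) D = opadd (opmul A D) (opmul B D).
Proof.
by apply: op_ext => c c'; rewrite /opmul /opadd -big_split; apply: eq_bigr => *; rewrite mulrDl.
Qed.

Lemma opmulDr (A B D : op) : opmul A (opadd B D) = opadd (opmul A B) (opmul A D).
Proof.
by apply: op_ext => c c'; rewrite /opmul /opadd -big_split; apply: eq_bigr => *; rewrite mulrDr.
Qed.

Lemma opmulBl (A B D : op) : opmul (opsub A B) D = opsub (opmul A D) (opmul B D).
Proof.
by apply: op_ext => c c'; rewrite /opmul /opsub -sumrB; apply: eq_bigr => *; rewrite mulrBl.
Qed.

Lemma opmulBr (A B D : op) : opmul A (opsub B D) = opsub (opmul A B) (opmul A D).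
Proof.
by apply: op_ext => c c'; rewrite /opmul /opsub -sumrB; apply: eq_bigr => *; rewrite mulrBr.
Qed.

Lemma opmulZl a (A B : op) : opmul (opscale a A) B = opscale a (opmul A B).
Proof.
by apply: op_ext => c c'; rewrite /opmul /opscale mulr_sumr; apply: eq_bigr => *; rewrite mulrA.
Qed.

Lemma opmulZr a (A B : op) : opmul A (opscale a B) = opscale a (opmul A B).
Proof.
by apply: op_ext => c c'; rewrite /opmul /opscale mulr_sumr; apply: eq_bigr => *; rewrite mulrCA.
Qed.

Lemma opmul0l (A : op) : opmul (fun _ _ => 0) A = (fun _ _ => 0).
Proof. by apply: op_ext => c c'; rewrite /opmul big1 // => *; rewrite mul0r. Qed.

Lemma opmul_sumr (I : Type) (r : seq I) (P : pred I) (F : I -> op) (A : op) c c' :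
  opmul A (fun c c' => \sum_(i <- r | P i) F i c c') c c'
  = \sum_(i <- r | P i) opmul A (F i) c c'.
Proof. by rewrite /opmul; under eq_bigr do rewrite mulr_sumr; rewrite exchange_big. Qed.

Lemma opmul_suml (I : Type) (r : seq I) (P : pred I) (F : I -> op) (A : op) c c' :
  opmul (fun c c' => \sum_(i <- r | P i) F i c c') A c c'
  = \sum_(i <- r | P i) opmul (F i) A c c'.
Proof. by rewrite /opmul; under eq_bigr do rewrite mulr_suml; rewrite exchange_big. Qed.

Lemma opapp1 (v : vec) : opapp idop v = v.
Proof.
apply: functional_extensionality => c.
rewrite /opapp /idop (bigD1 c) //= eqxx mul1r big1 ?addr0 // => c1.
by rewrite eq_sym => /negbTE ->; rewrite mul0r.
Qed.

Lemma opmul1l (A : op) : opmul idop A = A.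
Proof.
apply: op_ext => c c'.
by have := congr1 (fun f => f c) (opapp1 (fun x => A x c')); rewrite /opapp /opmul.
Qed.

Lemma opmul1r (A : op) : opmul A idop = A.
Proof.
apply: op_ext => c c'.
rewrite /opmul /idop (bigD1 c') //= eqxx mulr1 big1 ?addr0 // => c1.
by move=> /negbTE ->; rewrite mulr0.
Qed.

Lemma opapp_col (A : op) c' : opapp A (fun c => idop c c') = (fun c => A c c').
Proof.
by apply: functional_extensionality => c; have := congr1 (fun f => f c c') (opmul1r A).
Qed.

Lemma opmul_fix_col (A B : op) :
  (forall c', opapp A (fun c => B c c') = (fun c => B c c')) -> opmul A B = B.
Proof. by move=> AB; apply: op_ext => c c'; have := congr1 (fun f => f c) (AB c'). Qed.

Lemma opappB (A B : op) (v : vec) :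
  opapp (opsub A B) v = (fun c => opapp A v c - opapp B v c).
Proof.
apply: functional_extensionality => c.
by rewrite /opapp /opsub -sumrB; apply: eq_bigr => *; rewrite mulrBl.
Qed.

Lemma opappZ a (A : op) (v : vec) :
  opapp (opscale a A) v = (fun c => a * opapp A v c).
Proof.
apply: functional_extensionality => c.
by rewrite /opapp /opscale mulr_sumr; apply: eq_bigr => *; rewrite mulrA.
Qed.

Lemma permop_app (s : 'S_N) (v : vec) (c : cfg) :
  opapp (pop s) v c = v [ffun x => c ((s^-1)%g x)].
Proof.
rewrite /opapp /permop (bigD1 [ffun x => c ((s^-1)%g x)]) //=.
have -> : c == [ffun x => [ffun x0 => c ((s^-1)%g x0)] (s x)].
  by apply/eqP/ffunP => x; rewrite !ffunE permK.
rewrite mul1r big1 ?addr0 // => c1 hc1.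
case: eqP => [E|]; last by rewrite mul0r.
by case/eqP: hc1; apply/ffunP => x; rewrite E !ffunE permKV.
Qed.

Lemma permopM (s t : 'S_N) : opmul (pop s) (pop t) = pop (s * t)%g.
Proof.
apply: op_ext => c c'.
have := permop_app s (fun x => pop t x c') c; rewrite /opapp /opmul => ->.
rewrite /permop; congr ((nat_of_bool _)%:R).
apply/eqP/eqP => E; apply/ffunP => x.
  by move/ffunP: E => /(_ (s x)); rewrite !ffunE permK permM => <-.
by rewrite !ffunE E ffunE permM permKV.
Qed.

Lemma permop1 : pop 1 = idop.
Proof.
apply: op_ext => c c'; rewrite /permop /idop.
by congr ((c == _)%:R); apply/ffunP => x; rewrite ffunE perm1.
Qed.

Lemma permop_adj (s : 'S_N) : opadj (pop s) = pop (s^-1)%g.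
Proof.
apply: op_ext => c c'; rewrite /opadj /permop conjC_nat.
congr ((nat_of_bool _)%:R); apply/eqP/eqP => E; apply/ffunP => x.
  by rewrite ffunE E ffunE permKV.
by rewrite E !ffunE permK.
Qed.

End OpAlgebra.

Arguments idop {C N d}.

Section SiteOp.
Variables (C : numClosedFieldType) (N d : nat).
Local Notation op := (op C N d).
Local Notation vec := (vec C N d).
Local Notation cfg := (cfg N d).

Definition agree (x : 'I_N) (c c' : cfg) :=
  [forall z, (z \notin [set x]) ==> (c z == c' z)].

(* Acts on site x as u |-> u *m M on row vectors, hence the transposed indices. *)
Definition site_op x (M : 'M[C]_d) : op :=
  fun c c' => if agree x c c' then M (c' x) (c x) else 0.

Definition upd (c : cfg) x (j : 'I_d) : cfg :=
  [ffun z => if z == x then j else c z].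

Lemma agree_sym x c c' : agree x c c' = agree x c' c.
Proof. by apply/forallP/forallP => H z; rewrite eq_sym; apply: H. Qed.

Lemma agree_trans x c1 c2 c3 : agree x c1 c2 -> agree x c2 c3 = agree x c1 c3.
Proof.
move=> /forallP H12; apply/forallP/forallP => H z; have := H12 z; have := H z.
  by case: (z \notin _) => //= /eqP <- /eqP ->.
by case: (z \notin _) => //= /eqP <- /eqP ->.
Qed.

Lemma agreeE x c c' : agree x c c' = (c' == upd c x (c' x)).
Proof.
apply/forallP/eqP => [H|E].
  apply/ffunP => z; rewrite ffunE; case: eqP => [->//|/eqP zx].
  by have := H z; rewrite in_set1 zx /= eq_sym => /eqP.
move=> z; rewrite in_set1; case: eqP => //= /eqP zx.
by rewrite E ffunE (negbTE zx).
Qed.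

Lemma upd_at c x j : upd c x j x = j.
Proof. by rewrite ffunE eqxx. Qed.

Lemma agree_upd x c j : agree x c (upd c x j).
Proof. by rewrite agreeE upd_at eqxx. Qed.

Lemma sum_agree x (c : cfg) (F : cfg -> C) :
  \sum_(c' | agree x c c') F c' = \sum_(j : 'I_d) F (upd c x j).
Proof.
rewrite (reindex_onto (upd c x) (fun c' : cfg => c' x)) /=; last first.
  by move=> c'; rewrite agreeE => /eqP <-.
by apply: eq_bigl => j; rewrite agree_upd upd_at eqxx.
Qed.

Lemma site_op_app x M (v : vec) c :
  opapp (site_op x M) v c = \sum_(j : 'I_d) M j (c x) * v (upd c x j).
Proof.
rewrite /opapp (bigID (agree x c)) /= [X in _ + X]big1 ?addr0; last first.
  by move=> c' /negbTE nc; rewrite /site_op nc mul0r.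
by rewrite sum_agree; apply: eq_bigr => j _; rewrite /site_op agree_upd upd_at.
Qed.

Lemma site_op1 x : site_op x 1%:M = @idop C N d.
Proof.
apply: op_ext => c c'; rewrite /site_op /idop mxE.
case: ifP => [|nagree]; last first.
  case: eqP => // E; move: nagree; rewrite E /agree.
  by move/negP; case; apply/forallP => z; rewrite eqxx implybT.
rewrite agreeE => /eqP E; congr ((nat_of_bool _)%:R); apply/eqP/eqP => [cx|<-//].
by rewrite E cx; apply/ffunP => z; rewrite ffunE; case: eqP => // ->.
Qed.

Lemma site_opB x M M' : site_op x (M - M') = opsub (site_op x M) (site_op x M').
Proof. by apply: op_ext => c c'; rewrite /site_op /opsub; case: ifP; rewrite ?mxE ?subr0. Qed.

Lemma site_opM x M M' : opmul (site_op x M) (site_op x M') = site_op x (M' *m M).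
Proof.
apply: op_ext => c c''; rewrite /opmul (bigID (agree x c'')) /=.
rewrite [X in _ + X]big1 ?addr0; last first.
  by move=> c' /negbTE nc; rewrite [site_op x M' _ _]/site_op agree_sym nc mulr0.
rewrite sum_agree /site_op.
have agree_c j : agree x c (upd c'' x j) = agree x c c''.
  by rewrite agree_sym (agree_trans _ (agree_upd x c'' j)) agree_sym.
under eq_bigr do rewrite agree_c upd_at (agree_sym x (upd _ _ _)) agree_upd.
case: ifP => _; last by rewrite big1 // => j _; rewrite mul0r.
by rewrite mxE; apply: eq_bigr => j _; rewrite mulrC.
Qed.

Lemma site_op_adj x (M M' : 'M[C]_d) : (forall i j, (M i j)^* = M' j i) ->
  opadj (site_op x M) = site_op x M'.
Proof.
move=> MM'; apply: op_ext => c c'; rewrite /opadj /site_op agree_sym.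
by case: ifP; rewrite ?MM' ?conjC0.
Qed.

Lemma site_op_acts x M : acts_only_on [set x] (site_op x M).
Proof.
exists (fun c c' => M (c' x) (c x)); split=> // c1 c1' c2 c2' H.
by have [-> ->] := H x (set11 x).
Qed.

End SiteOp.

Section PrefixOp.
Variables (C : numClosedFieldType) (N d : nat) (M : 'M[C]_d).
Local Notation op := (op C N d).

Definition prefix_op (k : nat) : op := fun c c' =>
  if [forall z : 'I_N, (k <= z)%N ==> (c z == c' z)]
  then \prod_(z : 'I_N | (z < k)%N) M (c' z) (c z) else 0.

Lemma prefix_op0 : prefix_op 0 = @idop C N d.
Proof.
apply: op_ext => c c'; rewrite /prefix_op /idop big_pred0 //; case: ifP => [/forallP H|].
  by have -> : c == c' by apply/eqP/ffunP => z; apply/eqP/H.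
by case: eqP => // ->; move/forallP; case=> z; rewrite eqxx implybT.
Qed.

Lemma prefix_opN c c' : prefix_op N c c' = \prod_(z : 'I_N) M (c' z) (c z).
Proof.
rewrite /prefix_op; have -> : [forall z : 'I_N, (N <= z)%N ==> (c z == c' z)].
  by apply/forallP => z; rewrite leqNgt ltn_ord.
by apply: eq_bigl => z; rewrite ltn_ord.
Qed.

Lemma prefix_opS (x : 'I_N) :
  opmul (prefix_op x) (site_op x M) = prefix_op x.+1.
Proof.
apply: op_ext => c c''; rewrite /opmul (bigID (agree x c'')) /=.
rewrite [X in _ + X]big1 ?addr0; last first.
  by move=> c' /negbTE nc; rewrite /site_op agree_sym nc mulr0.
rewrite sum_agree.
have prod_upd j : \prod_(z : 'I_N | (z < x)%N) M (upd c'' x j z) (c z)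
               = \prod_(z : 'I_N | (z < x)%N) M (c'' z) (c z).
  by apply: eq_bigr => z zx; rewrite ffunE; case: eqP => // E; rewrite E ltnn in zx.
have fixed_upd j : [forall z : 'I_N, (x <= z)%N ==> (c z == upd c'' x j z)]
   = (c x == j) && [forall z : 'I_N, (x.+1 <= z)%N ==> (c z == c'' z)].
  apply/forallP/andP => [H|[/eqP cx /forallP H] z].
    split; first by have := H x; rewrite upd_at leqnn.
    apply/forallP => z; apply/implyP => xz; have := H z.
    have /negbTE zx : z != x by rewrite -val_eqE /= gtn_eqF.
    by rewrite ffunE (ltnW xz) zx.
  rewrite ffunE; case: (z =P x) => [->|/eqP zx]; first by rewrite cx eqxx implybT.
  by apply/implyP => xz; apply: (implyP (H z)); rewrite ltn_neqAle xz andbT eq_sym.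
rewrite (bigD1 (c x)) //= big1 ?addr0; last first.
  by move=> j /negbTE nj; rewrite /prefix_op fixed_upd eq_sym nj mul0r.
rewrite /prefix_op fixed_upd prod_upd eqxx /= /site_op (agree_sym x (upd _ _ _)) agree_upd upd_at.
case: ifP => _; last by rewrite mul0r.
rewrite [in RHS](bigD1 x) //= mulrC; congr (_ * _); apply: eq_bigl => z.
by rewrite ltnS andbC -ltn_neqAle.
Qed.

End PrefixOp.

Section TensorSubspace.
Variables (C : numClosedFieldType) (N d k : nat) (S : 'M[C]_(k, d)).
Local Notation vec := (vec C N d).
Local Notation cfg := (cfg N d).
Local Notation in_tensor := (@in_tensor C N d k S).
Lemma in_tensor0 : in_tensor (fun _ => 0).
Proof.
exists 0%N, (fun _ _ => 0); split=> [*|]; first exact: sub0mx.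
by apply: functional_extensionality => c; rewrite big_ord0.
Qed.

Lemma in_tensorD v1 v2 :
  in_tensor v1 -> in_tensor v2 -> in_tensor (fun c => v1 c + v2 c).
Proof.
move=> [m1 [u1 [H1 ->]]] [m2 [u2 [H2 ->]]].
exists (m1 + m2)%N, (fun i => match split i with inl a => u1 a | inr b => u2 b end).
split=> [i x|]; first by case: (split i).
apply: functional_extensionality => c; rewrite big_split_ord /=.
by congr (_ + _); apply: eq_bigr => i _; rewrite ?(unsplitK (inl _ i)) ?(unsplitK (inr _ i)).
Qed.

(* The scalar is absorbed into the factor at site x0; for N = 0 the
   predicate in_tensor only holds of the natural-number constants. *)
Lemma in_tensorZ (x0 : 'I_N) a v : in_tensor v -> in_tensor (fun c => a * v c).
Proof.
move=> [m [u [Hu ->]]].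
exists m, (fun i x => if x == x0 then a *: u i x else u i x); split.
  by move=> i x; case: eqP => _; rewrite ?scalemx_sub.
apply: functional_extensionality => c; rewrite mulr_sumr; apply: eq_bigr => i _.
rewrite (bigD1 x0) //= [in RHS](bigD1 x0) //= eqxx mxE mulrA; congr (_ * _).
by apply: eq_bigr => x /negbTE ->.
Qed.

Lemma in_tensor_sum (I : Type) (r : seq I) (F : I -> vec) :
  (forall i, in_tensor (F i)) -> in_tensor (fun c => \sum_(i <- r) F i c).
Proof.
move=> HF; elim: r => [|i r IH].
  by under [fun c => _]functional_extensionality do rewrite big_nil; exact: in_tensor0.
under [fun c => _]functional_extensionality do rewrite big_cons.
exact: in_tensorD.
Qed.

Lemma in_tensor_perm (s : 'S_N) v : in_tensor v -> in_tensor (opapp (permop C s) v).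
Proof.
move=> [m [u [Hu ->]]]; exists m, (fun i y => u i (s y)); split=> //.
apply: functional_extensionality => c; rewrite permop_app; apply: eq_bigr => i _.
rewrite (reindex_inj (@perm_inj _ s)) /=; apply: eq_bigr => y _.
by rewrite ffunE permK.
Qed.

Lemma in_tensor_prefix_opN (M : 'M[C]_d) (x0 : 'I_N) (v : vec) :
  (forall j, (row j M <= S)%MS) -> in_tensor (opapp (prefix_op M N) v).
Proof.
move=> M_rows.
have -> : opapp (prefix_op M N) v
          = fun c => \sum_(c' : cfg) v c' * \prod_x (row (c' x) M) 0 (c x).
  apply: functional_extensionality => c; apply: eq_bigr => c' _.
  by rewrite prefix_opN mulrC; congr (_ * _); apply: eq_bigr => x _; rewrite [RHS]mxE.
apply: in_tensor_sum => c'; apply: (in_tensorZ x0).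
exists 1%N, (fun _ x => row (c' x) M); split=> [_ x|]; first exact: M_rows.
by apply: functional_extensionality => c; rewrite big_ord1.
Qed.

Section FixingMatrix.
Variables (M : 'M[C]_d) (M_fix : forall u : 'rV[C]_d, (u <= S)%MS -> u *m M = u).

Lemma site_op_fix x v : in_tensor v -> opapp (site_op x M) v = v.
Proof.
move=> [m [u [Hu ->]]]; apply: functional_extensionality => c.
rewrite site_op_app; under eq_bigr do rewrite mulr_sumr.
rewrite exchange_big /=; apply: eq_bigr => i _.
transitivity (\sum_(j < d) (u i x 0 j * M j (c x)) * \prod_(z | z != x) u i z 0 (c z)).
  apply: eq_bigr => j _; rewrite (bigD1 x) //= upd_at mulrA [M _ _ * _]mulrC.
  by congr (_ * _); apply: eq_bigr => z /negbTE zx; rewrite ffunE zx.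
rewrite -mulr_suml [RHS](bigD1 x) //=; congr (_ * _).
by rewrite -[in RHS](M_fix (Hu i x)) [RHS]mxE.
Qed.

Lemma prefix_op_fix i v : (i <= N)%N -> in_tensor v -> opapp (prefix_op M i) v = v.
Proof.
move=> + Hv; elim: i => [|i IH] iN; first by rewrite prefix_op0 opapp1.
by rewrite -(prefix_opS _ (Ordinal iN)) opappM site_op_fix // IH // ltnW.
Qed.

End FixingMatrix.

End TensorSubspace.

Section Symmetrizer.
Variables (C : numClosedFieldType) (N d : nat).
Local Notation op := (op C N d).
Local Notation vec := (vec C N d).
Local Notation pop := (@permop C N d).

Definition symop : op := opscale N`!%:R^-1 (fun c c' => \sum_(t : 'S_N) pop t c c').

Lemma fact_neq0 : (N`!%:R : C) != 0.
Proof. by rewrite pnatr_eq0 -lt0n fact_gt0. Qed.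

Lemma permop_symop (s : 'S_N) : opmul (pop s) symop = symop.
Proof.
apply: op_ext => c c'; rewrite opmulZr /opscale opmul_sumr.
under eq_bigr do rewrite permopM.
by rewrite /symop /opscale [in RHS](reindex_inj (mulgI s)).
Qed.

Lemma symop_permop (s : 'S_N) : opmul symop (pop s) = symop.
Proof.
apply: op_ext => c c'; rewrite opmulZl /opscale opmul_suml.
under eq_bigr do rewrite permopM.
by rewrite /symop /opscale [in RHS](reindex_inj (mulIg s)).
Qed.

Lemma symop_app (v : vec) c :
  opapp symop v c = N`!%:R^-1 * \sum_(t : 'S_N) opapp (pop t) v c.
Proof.
rewrite /opapp /symop /opscale; under eq_bigr do rewrite -mulrA mulr_suml.
by rewrite -mulr_sumr exchange_big.
Qed.

Lemma symop_fix (v : vec) :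
  (forall s : 'S_N, opapp (pop s) v = v) -> opapp symop v = v.
Proof.
move=> Hv; apply: functional_extensionality => c; rewrite symop_app.
under eq_bigr do rewrite Hv.
by rewrite sumr_const card_Sn -[v c *+ _]mulr_natl mulrA mulVf ?mul1r ?fact_neq0.
Qed.

Lemma idop_sub_symop : opsub idop symop
  = opscale N`!%:R^-1 (fun c c' => \sum_(t : 'S_N) opsub idop (pop t) c c').
Proof.
apply: op_ext => c c'; rewrite /opsub /symop /opscale sumrB sumr_const card_Sn.
by rewrite mulrBr -[idop _ _ *+ _]mulr_natl mulrA mulVf ?mul1r ?fact_neq0.
Qed.

Lemma in_tensor_symop k (S : 'M[C]_(k, d)) (x0 : 'I_N) (v : vec) :
  in_tensor S v -> in_tensor S (opapp symop v).
Proof.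
move=> Hv; under [opapp _ _]functional_extensionality do rewrite symop_app.
by apply: (in_tensorZ x0); apply: in_tensor_sum => t; exact: in_tensor_perm.
Qed.

End Symmetrizer.

Section LeftIdeal.
Variables (C : numClosedFieldType) (N d : nat) (e : rel 'I_N).
Variables (P1 : 'I_N -> op C N d) (P2 : 'I_N -> 'I_N -> op C N d).
Local Notation op := (op C N d).
Local Notation zero := (fun _ _ => 0 : C).

Definition in_ideal (X : op) :=
  exists (h1 : 'I_N -> op) (h2 : 'I_N -> 'I_N -> op), forall c c',
    X c c' = \sum_(x : 'I_N) opmul (h1 x) (P1 x) c c'
             + \sum_(x : 'I_N) \sum_(y : 'I_N | (x < y)%N && e x y)
                 opmul (h2 x y) (P2 x y) c c'.

Lemma in_ideal0 : in_ideal zero.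
Proof.
exists (fun _ => zero), (fun _ _ => zero) => c c'.
rewrite !big1 ?addr0 // => x _; first by rewrite big1 // => y _; rewrite opmul0l.
by rewrite opmul0l.
Qed.

Lemma in_idealD X Y : in_ideal X -> in_ideal Y -> in_ideal (opadd X Y).
Proof.
move=> [h1 [h2 HX]] [g1 [g2 HY]].
exists (fun x => opadd (h1 x) (g1 x)), (fun x y => opadd (h2 x y) (g2 x y)) => c c'.
rewrite /opadd HX HY; under [X in _ = X + _]eq_bigr do rewrite opmulDl.
under [X in _ = _ + X]eq_bigr do under eq_bigr do rewrite opmulDl.
rewrite /opadd; under [X in _ = _ + X]eq_bigr do rewrite big_split /=.
by rewrite !big_split /= addrACA.
Qed.

Lemma in_idealMl Y X : in_ideal X -> in_ideal (opmul Y X).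
Proof.
move=> [h1 [h2 HX]].
exists (fun x => opmul Y (h1 x)), (fun x y => opmul Y (h2 x y)) => c c'.
have -> : X = opadd (fun a b => \sum_(x : 'I_N) opmul (h1 x) (P1 x) a b)
   (fun a b => \sum_(x : 'I_N) \sum_(y : 'I_N | (x < y)%N && e x y)
                  opmul (h2 x y) (P2 x y) a b).
  exact: op_ext.
rewrite opmulDr /opadd !opmul_sumr; congr (_ + _); apply: eq_bigr => x _.
  by rewrite opmulA.
by rewrite opmul_sumr; apply: eq_bigr => y _; rewrite opmulA.
Qed.

Lemma in_idealZ a X : in_ideal X -> in_ideal (opscale a X).
Proof. by move/(in_idealMl (opscale a idop)); rewrite opmulZl opmul1l. Qed.

Lemma in_ideal_sum (I : Type) (r : seq I) (F : I -> op) :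
  (forall i, in_ideal (F i)) -> in_ideal (fun c c' => \sum_(i <- r) F i c c').
Proof.
move=> HF; elim: r => [|i r IH].
  by under [fun c c' => _]op_ext do rewrite big_nil; exact: in_ideal0.
under [fun c c' => _]op_ext do rewrite big_cons.
exact: in_idealD.
Qed.

Lemma in_ideal_site Y x : in_ideal (opmul Y (P1 x)).
Proof.
exists (fun z => if z == x then Y else zero), (fun _ _ => zero) => c c'.
rewrite [X in _ = _ + X]big1 ?addr0; last by move=> *; rewrite big1 // => *; rewrite opmul0l.
rewrite (bigD1 x) //= eqxx big1 ?addr0 // => z /negbTE ->.
by rewrite opmul0l.
Qed.

Hypotheses (e_sym : symmetric e) (e_irr : irreflexive e).
Hypothesis P2C : forall x y, P2 x y = P2 y x.

Lemma in_ideal_edge Y x y : e x y -> in_ideal (opmul Y (P2 x y)).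
Proof.
wlog xy : x y / (x < y)%N.
  move=> W exy; case: (ltngtP x y) => [/W|/W|/val_inj E]; first exact.
    by rewrite P2C; apply; rewrite e_sym.
  by move: exy; rewrite E e_irr.
move=> exy.
exists (fun _ => zero), (fun a b => if (a == x) && (b == y) then Y else zero) => c c'.
rewrite big1 ?add0r => [|z _]; last by rewrite opmul0l.
rewrite (bigD1 x) //= [X in _ = _ + X]big1 ?addr0; last first.
  by move=> a /negbTE ax; rewrite big1 // => b _; rewrite ax opmul0l.
rewrite (bigD1 y) /=; last by rewrite xy exy.
rewrite !eqxx /= big1 ?addr0 // => b /andP [_ /negbTE ->].
by rewrite opmul0l.
Qed.

End LeftIdeal.

Section Projectors.
Variables (C : numClosedFieldType) (N d k : nat) (S : 'M[C]_(k, d)).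
Local Notation op := (op C N d).
Local Notation pop := (@permop C N d).
Local Notation Q := (orthoproj S).

Definition site_proj x : op := site_op x (1%:M - Q).

Definition bond_proj (x y : 'I_N) : op := opscale 2^-1 (opsub idop (pop (tperm x y))).

Lemma site_projE x : site_proj x = opsub idop (site_op x Q).
Proof. by rewrite /site_proj site_opB site_op1. Qed.

Lemma site_proj_orth x : orth_proj (site_proj x).
Proof.
split.
  by rewrite /site_proj site_opM mulmxBl mul1mx mulmxBr mulmx1 orthoproj_idem subrr subr0.
apply: site_op_adj => i j.
rewrite [(_ - _ : 'M_d) i j]mxE [(_ - _ : 'M_d) j i]mxE.
rewrite [(- _ : 'M_d) i j]mxE [(- _ : 'M_d) j i]mxE.
rewrite [(1%:M : 'M_d) i j]mxE [(1%:M : 'M_d) j i]mxE.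
by rewrite rmorphB /= conjC_nat orthoproj_conj eq_sym.
Qed.

Lemma site_proj_ann x : annihilates S (site_proj x).
Proof.
move=> v [Hv _]; rewrite site_projE opappB opapp1 (site_op_fix (@orthoproj_id _ _ _ S)) //.
by apply: functional_extensionality => c; rewrite subrr.
Qed.

Lemma bond_projC x y : bond_proj x y = bond_proj y x.
Proof. by rewrite /bond_proj tpermC. Qed.

Lemma bond_proj_orth x y : orth_proj (bond_proj x y).
Proof.
split.
  rewrite /bond_proj opmulZl opmulZr opmulBl !opmulBr !opmul1l opmul1r.
  rewrite permopM tperm2 permop1.
  by apply: op_ext => c c'; rewrite /opscale /opsub; field.
apply: op_ext => c c'.
have := congr1 (fun f => f c c') (@permop_adj C N d (tperm x y)).
rewrite /opadj /bond_proj /opscale /opsub tpermV => <-.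
by rewrite rmorphM rmorphB /= fmorphV /= !conjC_nat /idop eq_sym.
Qed.

Lemma bond_proj_ann x y : annihilates S (bond_proj x y).
Proof.
move=> v [_ Hv]; rewrite /bond_proj opappZ opappB opapp1 Hv.
by apply: functional_extensionality => c; rewrite subrr mulr0.
Qed.
Lemma bond_proj_acts x y : x != y -> acts_only_on [set x; y] (bond_proj x y).
Proof.
move=> xy.
exists (fun c c' => 2^-1 * (((c x == c' x) && (c y == c' y))%:R
                          - ((c x == c' y) && (c y == c' x))%:R)); split; last first.
  move=> c1 c1' c2 c2' H.
  by have [-> ->] := H x (set21 x y); have [-> ->] := H y (set22 x y).
move=> c c'; rewrite /bond_proj /opscale /opsub /idop /permop.
case: ifP => [/forallP H|/negbT]; last first.
  rewrite negb_forall => /existsP [z]; rewrite negb_imply !inE negb_or.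
  move=> /andP [/andP [zx zy] czz'].
  have -> : (c == c') = false by apply: contraNF czz' => /eqP ->.
  have -> : (c == [ffun z0 => c' (tperm x y z0)]) = false.
    by apply: contraNF czz' => /eqP ->; rewrite ffunE tpermD // eq_sym.
  by rewrite subrr mulr0.
have outside z : z != x -> z != y -> c z = c' z.
  by move=> zx zy; apply/eqP; have := H z; rewrite !inE (negbTE zx) (negbTE zy).
congr (_ * (_ - _)); congr ((nat_of_bool _)%:R).
  apply/eqP/andP => [->|[/eqP cx /eqP cy]]; first by rewrite !eqxx.
  apply/ffunP => z; have [->|zx] := eqVneq z x => //; have [->|zy] := eqVneq z y => //.
  exact: outside.
apply/eqP/andP => [->|[/eqP cx /eqP cy]]; first by rewrite !ffunE tpermL tpermR !eqxx.
apply/ffunP => z; rewrite ffunE.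
have [->|zx] := eqVneq z x; first by rewrite tpermL.
have [->|zy] := eqVneq z y; first by rewrite tpermR.
by rewrite tpermD 1?eq_sym // outside.
Qed.

End Projectors.

Arguments bond_proj {C N d}.
Arguments bond_projC {C N d}.

Section IdealMembership.
Variables (C : numClosedFieldType) (N d k : nat) (S : 'M[C]_(k, d)) (e : rel 'I_N).
Local Notation pop := (@permop C N d).
Local Notation in_ideal := (in_ideal e (site_proj S) bond_proj).

Lemma in_ideal_sub_permopM s t :
  in_ideal (opsub idop (pop s)) -> in_ideal (opsub idop (pop t)) ->
  in_ideal (opsub idop (pop (s * t)%g)).
Proof.
move=> Hs /(in_idealMl (pop s)) /(in_idealD Hs).
rewrite opmulBr opmul1r permopM; congr in_ideal.
by apply: op_ext => c c'; rewrite /opadd /opsub addrA subrK.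
Qed.

Lemma in_ideal_sub_permop1 : in_ideal (opsub idop (pop 1)).
Proof. by rewrite permop1 opsubrr; exact: in_ideal0. Qed.

Lemma in_ideal_sub_prefix_op i : (i <= N)%N ->
  in_ideal (opsub idop (prefix_op (orthoproj S) i)).
Proof.
elim: i => [|i IH] iN; first by rewrite prefix_op0 opsubrr; exact: in_ideal0.
have := in_ideal_site e (site_proj S) bond_proj (prefix_op (orthoproj S) i) (Ordinal iN).
move=> /(in_idealD (IH (ltnW iN))).
rewrite site_projE opmulBr opmul1r (prefix_opS _ (Ordinal iN)); congr in_ideal.
by apply: op_ext => c c'; rewrite /opadd /opsub addrA subrK.
Qed.

Hypotheses (e_sym : symmetric e) (e_irr : irreflexive e).

Lemma in_ideal_sub_tperm_edge x y : e x y -> in_ideal (opsub idop (pop (tperm x y))).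
Proof.
move=> /(in_ideal_edge (site_proj S) e_sym e_irr bond_projC (opscale 2 idop)).
rewrite /bond_proj opmulZl opmul1l; congr in_ideal; apply: op_ext => c c'.
by rewrite /opscale mulrA mulfV ?mul1r ?pnatr_eq0.
Qed.

Lemma in_ideal_sub_tperm_step a b0 b1 : e b0 b1 ->
  in_ideal (opsub idop (pop (tperm a b0))) -> in_ideal (opsub idop (pop (tperm a b1))).
Proof.
move=> e01 Ha0.
have [->|b1a] := eqVneq b1 a; first by rewrite tperm1; exact: in_ideal_sub_permop1.
have [b0a|b0a] := eqVneq b0 a; first by rewrite -b0a; exact: in_ideal_sub_tperm_edge.
have b01 : b0 != b1 by apply: contraTneq e01 => ->; rewrite e_irr.
have -> : tperm a b1 = (tperm b0 b1 * tperm a b0 * tperm b0 b1)%g.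
  by rewrite -{1}(tpermV b0 b1) -mulgA -conjgE tpermJ tpermL tpermD // eq_sym.
have E01 := in_ideal_sub_tperm_edge e01.
by do 2![apply: in_ideal_sub_permopM => //].
Qed.

Hypothesis e_conn : forall x y, connect e x y.

Lemma in_ideal_sub_tperm a b : in_ideal (opsub idop (pop (tperm a b))).
Proof.
have [p path_p ->] := connectP (e_conn a b).
have : in_ideal (opsub idop (pop (tperm a a))) by rewrite tperm1; exact: in_ideal_sub_permop1.
elim: p a path_p {1 3}a => [|b1 p IH] b0 /= => [_ //|/andP [e01 path_p]] a Ha.
exact/(IH _ path_p)/(in_ideal_sub_tperm_step e01).
Qed.

Lemma in_ideal_sub_permop s : in_ideal (opsub idop (pop s)).
Proof.
have [ts -> _] := prod_tpermP s; elim: ts => [|t ts IH].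
  by rewrite big_nil; exact: in_ideal_sub_permop1.
by rewrite big_cons; apply: in_ideal_sub_permopM => //; exact: in_ideal_sub_tperm.
Qed.

Lemma in_ideal_sub_symop : in_ideal (opsub idop (@symop C N d)).
Proof.
by rewrite idop_sub_symop; apply/in_idealZ/in_ideal_sum => t; exact: in_ideal_sub_permop.
Qed.

End IdealMembership.

Section SymProj.
Variables (C : numClosedFieldType) (N d k : nat) (S : 'M[C]_(k, d)).
Local Notation op := (op C N d).
Local Notation pop := (@permop C N d).
Local Notation Q := (orthoproj S).
Local Notation A := (@symop C N d).

Definition sym_proj : op := opmul A (opmul (prefix_op Q N) A).

Lemma sym_proj_fix v : in_sym S v -> opapp sym_proj v = v.
Proof.
move=> [Hv Hs].
by rewrite !opappM symop_fix // (prefix_op_fix (@orthoproj_id _ _ _ S)) // symop_fix.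
Qed.

Lemma in_sym_sym_proj (x0 : 'I_N) v : in_sym S (opapp sym_proj v).
Proof.
split; last by move=> s; rewrite -opappM opmulA permop_symop.
rewrite !opappM; apply: (in_tensor_symop x0).
exact/in_tensor_prefix_opN/row_orthoproj_sub.
Qed.

Lemma in_ideal_sub_sym_proj (e : rel 'I_N) : connected_graph e ->
  in_ideal e (site_proj S) bond_proj (opsub idop sym_proj).
Proof.
move=> [e_sym [e_irr e_conn]].
have -> : opsub idop sym_proj = opadd (opsub idop A)
    (opadd (opmul A (opsub idop (prefix_op Q N)))
           (opmul (opmul A (prefix_op Q N)) (opsub idop A))).
  rewrite !opmulBr !opmul1r /sym_proj opmulA.
  by apply: op_ext => c c'; rewrite /opadd /opsub !addrA !subrK.
have sub_symop := in_ideal_sub_symop S e_sym e_irr e_conn.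
apply: in_idealD => //; apply: in_idealD; apply: in_idealMl => //.
exact: in_ideal_sub_prefix_op.
Qed.

Lemma sym_proj_permop s : opmul sym_proj (pop s) = sym_proj.
Proof. by rewrite /sym_proj -!opmulA symop_permop. Qed.

Lemma sym_proj_commute (H : op) :
  (forall v, in_sym S v -> in_sym S (opapp H v)) ->
  forall s : 'S_N, opmul (pop s) (opmul (opmul H sym_proj) (pop s^-1)) = opmul H sym_proj.
Proof.
move=> H_inv s; rewrite -opmulA sym_proj_permop.
have [N0|N_gt0] := posnP N.
  have -> : s = 1%g by apply/permP => x; move: (ltn_ord x); rewrite [X in (_ < X)%N]N0.
  by rewrite permop1 opmul1l.
apply: opmul_fix_col => c'; rewrite -opapp_col opappM.
by have [_ ->] := H_inv _ (in_sym_sym_proj (Ordinal N_gt0) (fun c => idop c c')).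
Qed.

End SymProj.

Unset Implicit Arguments.

Theorem corollary5p1 (C : numClosedFieldType) (N d k : nat) (e : rel 'I_N)
  (S : 'M[C]_(k, d)) (H : op C N d) :
  connected_graph e ->
  (forall v, in_sym S v -> in_sym S (opapp H v)) ->
  exists (HA HZ : op C N d),
    H = opadd HA HZ /\
    (forall s : 'S_N,
       opmul (permop C s) (opmul HZ (permop C s^-1)) = HZ) /\
    annihilates S HA /\
    (exists (h1 P1 : 'I_N -> op C N d) (h2 P2 : 'I_N -> 'I_N -> op C N d),
       (forall x, orth_proj (P1 x) /\ acts_only_on [set x] (P1 x)
                  /\ annihilates S (P1 x)) /\
       (forall x y, e x y ->
          orth_proj (P2 x y) /\ acts_only_on [set x; y] (P2 x y)
          /\ annihilates S (P2 x y)) /\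
       (forall c c', HA c c' =
          \sum_(x : 'I_N) opmul (h1 x) (P1 x) c c'
          + \sum_(x : 'I_N) \sum_(y : 'I_N | (x < y)%N && e x y)
              opmul (h2 x y) (P2 x y) c c')) /\
    (forall v (lam : C), in_sym S v ->
       opapp HZ v = (fun c => lam * v c) ->
       opapp H v = (fun c => lam * v c)).
Proof.
move=> e_conn H_inv; have [_ [e_irr _]] := e_conn.
pose HZ := opmul H (sym_proj S).
have HZ_on_sym v : in_sym S v -> opapp HZ v = opapp H v by move=> Sv; rewrite opappM sym_proj_fix.
exists (opsub H HZ), HZ; split; first by apply: op_ext => c c'; rewrite /opadd /opsub subrK.
split; first exact: sym_proj_commute.
split.
  move=> v Sv; rewrite opappB HZ_on_sym //.
  by apply: functional_extensionality => c; rewrite subrr.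
split; last by move=> v lam Sv <-; rewrite HZ_on_sym.
have [h1 [h2 HA_ideal]] : in_ideal e (site_proj S) bond_proj (opsub H HZ).
  by rewrite -{1}(opmul1r H) -opmulBr; apply/in_idealMl/in_ideal_sub_sym_proj.
exists h1, (site_proj S), h2, bond_proj; split; last split=> //.
  by move=> x; split; [exact: site_proj_orth | split; [exact: site_op_acts | exact: site_proj_ann]].
move=> x y exy; split; first exact: bond_proj_orth.
split; last exact: bond_proj_ann.
by apply: bond_proj_acts; apply: contraTneq exy => ->; rewrite e_irr.
Qed.
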